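(* Let $m\ge 1$ and let $G$ be any co-bipartite graph $\overline{B(K_m,K_2)}$, i.e. any graph whose vertex set is the disjoint union of a clique $K_m$ on $m$ vertices and a clique $K_2$ on $2$ vertices, with an arbitrary set of edges between $V(K_m)$ and $V(K_2)$. Then $G$ is word-representable.
   Context: A graph $G=(V,E)$ is word-representable if there exists a word $w$ over the alphabet $V$, containing every letter of $V$ at least once, such that for all distinct $x,y\in V$, the letters $x$ and $y$ alternate in $w$ (i.e., the subword of $w$ obtained by deleting all letters other than $x,y$ has no two equal consecutive letters) if and only if $xy\in E$. $\overline{B(K_m,K_n)}$ denotes a co-bipartite graph whose vertex set is partitioned into two cliques $K_m$ and $K_n$ of sizes $m$ and $n$, with arbitrary edges between the two cliques. *)

From mathcomp Require Import all_boot.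
Set Implicit Arguments. Unset Strict Implicit. Unset Printing Implicit Defensive.

Definition simple_graph (T : finType) (e : rel T) : Prop :=
  symmetric e /\ irreflexive e.

Definition restrict2 (T : eqType) (w : seq T) (x y : T) : seq T :=
  [seq z <- w | (z == x) || (z == y)].

Definition alternate (T : eqType) (w : seq T) (x y : T) : bool :=
  let s := restrict2 w x y in
  all (fun p => p.1 != p.2) (zip s (behead s)).

Definition represents (T : finType) (e : rel T) (w : seq T) : Prop :=
  (forall x : T, x \in w) /\
  (forall x y : T, x != y -> (alternate w x y <-> e x y)).

Definition word_representable (T : finType) (e : rel T) : Prop :=
  exists w : seq T, represents e w.

Definition is_clique (T : finType) (e : rel T) (A : {set T}) : Prop :=
  forall x y, x \in A -> y \in A -> x != y -> e x y.

From mathcomp Require Import all_boot.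
Set Implicit Arguments. Unset Strict Implicit. Unset Printing Implicit Defensive.

(* Write K_2 = {a, b} and split the clique vertices into the four classes
   C_ij (i = [x -- a], j = [x -- b]), each listed in a fixed order.  The word
     C11 C01 C00 a C10 b C11 a C01 b C00 C10
   contains every clique vertex twice and its restriction to the clique is
   a permutation repeated twice, so clique vertices pairwise alternate; a and
   b alternate; and a vertex of C_ij alternates with a iff i = 1 and with b
   iff j = 1, which is read off from the positions of its two copies. *)

Lemma restrict2_cat (T : eqType) (u v : seq T) x y :
  restrict2 (u ++ v) x y = restrict2 u x y ++ restrict2 v x y.
Proof. by rewrite /restrict2 filter_cat. Qed.

Lemma restrict2_filter (T : eqType) (p : pred T) (s : seq T) x y :
  restrict2 [seq z <- s | p z] x y = [seq z <- restrict2 s x y | p z].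
Proof. by rewrite /restrict2 -!filter_predI; apply: eq_filter => z /=; rewrite andbC. Qed.

Lemma alternateC (T : eqType) (w : seq T) x y : alternate w x y = alternate w y x.
Proof.
rewrite /alternate /restrict2 (eq_filter (a2 := fun z => (z == y) || (z == x))) //.
by move=> z; rewrite orbC.
Qed.

Lemma restrict2_uniq (T : eqType) (s : seq T) x y :
  uniq s -> x \in s -> y \in s -> x != y ->
  restrict2 s x y = [:: x; y] \/ restrict2 s x y = [:: y; x].
Proof.
move=> s_uniq xs ys xy.
have r_uniq : uniq (restrict2 s x y) by rewrite filter_uniq.
have r_perm : perm_eq (restrict2 s x y) [:: x; y].
  apply: uniq_perm => //=; first by rewrite inE xy.
  by move=> z; rewrite mem_filter !inE; case: eqP => [->|_]; case: eqP => [->|_]; rewrite ?andbF.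
move: r_uniq r_perm (perm_size r_perm).
case: (restrict2 s x y) => [|u [|v [|? ?]]] //= /andP[]; rewrite inE => uv _ r_perm _.
have: u \in [:: x; y] by rewrite -(perm_mem r_perm) inE eqxx.
have: v \in [:: x; y] by rewrite -(perm_mem r_perm) !inE eqxx orbT.
by move: uv; rewrite !inE => uv /orP[]/eqP vE /orP[]/eqP uE; subst u v;
  rewrite ?eqxx in uv *; auto.
Qed.

Lemma notin_neq (T : eqType) (s : seq T) x y : x \in s -> y \notin s -> (x == y) = false.
Proof. by move=> xs; apply: contraNF => /eqP <-. Qed.

Lemma restrict2_uniq1 (T : eqType) (s : seq T) x y :
  uniq s -> x \in s -> y \notin s -> restrict2 s x y = [:: x].
Proof.
move=> s_uniq xs ys; rewrite /restrict2 -(filter_pred1_uniq s_uniq xs).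
by apply: eq_in_filter => z zs /=; rewrite (notin_neq zs ys) orbF.
Qed.

Lemma restrict2_notin (T : eqType) (s : seq T) x y :
  x \notin s -> y \notin s -> restrict2 s x y = [::].
Proof.
move=> xs ys; apply/eqP; rewrite -size_eq0 size_filter -leqn0 leqNgt -has_count.
by apply/hasPn => z zs; apply/negP => /orP[]/eqP zE; rewrite -zE zs in xs ys.
Qed.

Section CobipartiteWord.

Variables (T : finType) (e : rel T) (a b : T).

Definition neighbour_class (ea eb : bool) (r : seq T) : seq T :=
  [seq z <- r | (e z a == ea) && (e z b == eb)].

(* [la] and [lb] stand for the one-letter words [:: a] and [:: b]; keeping
   them abstract makes the pattern stable under [restrict2]. *)
Definition cobip_pattern (r la lb : seq T) : seq T :=
  let C ea eb := neighbour_class ea eb r in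
  C true true ++ C false true ++ C false false ++ la ++ C true false ++ lb ++
  C true true ++ la ++ C false true ++ lb ++ C false false ++ C true false.

Lemma restrict2_cobip_pattern r la lb x y :
  restrict2 (cobip_pattern r la lb) x y =
  cobip_pattern (restrict2 r x y) (restrict2 la x y) (restrict2 lb x y).
Proof. by rewrite /cobip_pattern /neighbour_class !restrict2_cat !restrict2_filter. Qed.

Definition cobip_word (r : seq T) : seq T := cobip_pattern r [:: a] [:: b].

Variable r : seq T.
Hypotheses (r_uniq : uniq r) (a_notin_r : a \notin r) (b_notin_r : b \notin r)
  (neq_ab : a != b).

Lemma mem_cobip_word x : (x \in cobip_word r) = [|| x \in r, x == a | x == b].
Proof.
rewrite /cobip_word /cobip_pattern /neighbour_class !mem_cat !mem_filter !inE.
by case: (x \in r); case: (e x a); case: (e x b); case: (x == a); case: (x == b).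
Qed.

Lemma alternate_cobip_word_in x y :
  x \in r -> y \in r -> x != y -> alternate (cobip_word r) x y.
Proof.
move=> xr yr xy; rewrite /alternate restrict2_cobip_pattern.
have xa := notin_neq xr a_notin_r; have xb := notin_neq xr b_notin_r.
have ya := notin_neq yr a_notin_r; have yb := notin_neq yr b_notin_r.
have -> : restrict2 [:: a] x y = [::] by rewrite /restrict2 /= ![a == _]eq_sym xa ya.
have -> : restrict2 [:: b] x y = [::] by rewrite /restrict2 /= ![b == _]eq_sym xb yb.
have xy' := negbTE xy; have yx : (y == x) = false by rewrite eq_sym.
have [->|->] := restrict2_uniq r_uniq xr yr xy; rewrite /cobip_pattern /neighbour_class /=;
by case: (e x a); case: (e x b); case: (e y a); case: (e y b); rewrite /= ?xy' ?yx.
Qed.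

Lemma alternate_cobip_word_a x : x \in r -> alternate (cobip_word r) x a = e x a.
Proof.
move=> xr; have xa := notin_neq xr a_notin_r; have xb := notin_neq xr b_notin_r.
have ba : (b == a) = false by rewrite eq_sym (negbTE neq_ab).
rewrite /alternate restrict2_cobip_pattern (restrict2_uniq1 r_uniq xr a_notin_r).
have -> : restrict2 [:: a] x a = [:: a] by rewrite /restrict2 /= eqxx orbT.
have -> : restrict2 [:: b] x a = [::] by rewrite /restrict2 /= eq_sym xb ba.
rewrite /cobip_pattern /neighbour_class /=.
by case: (e x a); case: (e x b); rewrite /= ?(eq_sym a x) ?xa ?eqxx.
Qed.

Lemma alternate_cobip_word_b x : x \in r -> alternate (cobip_word r) x b = e x b.
Proof.
move=> xr; have xa := notin_neq xr a_notin_r; have xb := notin_neq xr b_notin_r.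
have ab := negbTE neq_ab.
rewrite /alternate restrict2_cobip_pattern (restrict2_uniq1 r_uniq xr b_notin_r).
have -> : restrict2 [:: a] x b = [::] by rewrite /restrict2 /= eq_sym xa ab.
have -> : restrict2 [:: b] x b = [:: b] by rewrite /restrict2 /= eqxx orbT.
rewrite /cobip_pattern /neighbour_class /=.
by case: (e x a); case: (e x b); rewrite /= ?(eq_sym b x) ?xb ?eqxx.
Qed.

Lemma alternate_cobip_word_ab : alternate (cobip_word r) a b.
Proof.
have ab := negbTE neq_ab; have ba : (b == a) = false by rewrite eq_sym.
rewrite /alternate restrict2_cobip_pattern restrict2_notin //.
have -> : restrict2 [:: a] a b = [:: a] by rewrite /restrict2 /= eqxx.
have -> : restrict2 [:: b] a b = [:: b] by rewrite /restrict2 /= eqxx orbT.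
by rewrite /cobip_pattern /neighbour_class /= ab ba.
Qed.

Lemma cobip_word_represents :
  symmetric e -> e a b -> {in r &, forall x y, x != y -> e x y} ->
  (forall z, [|| z \in r, z == a | z == b]) -> represents e (cobip_word r).
Proof.
move=> e_sym eab clique_r cover; split=> [x|x y xy]; first by rewrite mem_cobip_word.
have ba : e b a by rewrite e_sym.
case/or3P: (cover x) => [xr|/eqP Ex|/eqP Ex]; case/or3P: (cover y) => [yr|/eqP Ey|/eqP Ey];
  subst; rewrite ?eqxx // in xy.
- by split=> _; [apply: clique_r | apply: alternate_cobip_word_in].
- by rewrite alternate_cobip_word_a.
- by rewrite alternate_cobip_word_b.
- by rewrite alternateC alternate_cobip_word_a // e_sym.
- by rewrite alternate_cobip_word_ab.
- by rewrite alternateC alternate_cobip_word_b // e_sym.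
- by rewrite alternateC alternate_cobip_word_ab.
Qed.

End CobipartiteWord.

Theorem mainTheorem8 (m : nat) (T : finType) (e : rel T) (A : {set T}) :
  1 <= m ->
  simple_graph e ->
  #|A| = m ->
  #|~: A| = 2 ->
  is_clique e A ->
  is_clique e (~: A) ->
  word_representable e.
Proof.
move=> _ [e_sym _] _ /eqP/cards2P[a [b [neq_ab defC]]] cliqueA cliqueC.
have notinA z : (z \notin A) = (z == a) || (z == b) by rewrite -in_setC defC !inE.
have aA : a \notin A by rewrite notinA eqxx.
have bA : b \notin A by rewrite notinA eqxx orbT.
exists (cobip_word e a b (enum A)).
apply: cobip_word_represents; rewrite ?enum_uniq ?mem_enum //.
- by apply: cliqueC; rewrite ?in_setC.
- by move=> x y; rewrite !mem_enum; apply: cliqueA.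
- by move=> z; rewrite mem_enum -notinA orbN.
Qed.
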